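(* Let $k\ge 1$ and let $v_0,\pi_1,v_1,\dots,\pi_k$ be generated by Approximate Value Iteration with errors $\epsilon_1,\dots,\epsilon_{k-1}$, and $\epsilon=\max_{1\le j<k}\operatorname{span}(\epsilon_j)$ (with $\epsilon=0$ if $k=1$). Let $\pi_{k,k}$ be the periodic non-stationary policy $\pi_k\,\pi_{k-1}\cdots\pi_1\,\pi_k\,\pi_{k-1}\cdots\pi_1\cdots$. Then $$\|v_*-v_{\pi_{k,k}}\|_\infty \le \left(\frac{\gamma}{1-\gamma}-\frac{\gamma^k}{1-\gamma^k}\right)\epsilon+\frac{\gamma^k}{1-\gamma^k}\operatorname{span}(v_*-v_0).$$
   Context: A Markov Decision Process with finite state space $S$, finite action space $A$, reward function $r(s,a)$, transition probabilities $p(s'|s,a)$ and discount factor $\gamma\in[0,1)$. For a (deterministic, stationary) policy $\pi:S\to A$, let $r_\pi(s)=r(s,\pi(s))$, let $P_\pi$ be the stochastic matrix $P_\pi(s,s')=p(s'|s,\pi(s))$, and let $T_\pi v=r_\pi+\gamma P_\pi v$ be the Bellman operator of $\pi$; $v_\pi$ is its unique fixed point. The Bellman optimality operator is $Tv=\max_\pi T_\pi v$ (componentwise), $v_*$ is its fixed point (the optimal value), and a policy $\pi$ is greedy with respect to $v$ if $T_\pi v=Tv$. For $f:S\to\mathbb R$, $\operatorname{span}(f)=\max_s f(s)-\min_s f(s)$. Approximate Value Iteration: from arbitrary $v_0$, for $j\ge0$ pick any $\pi_{j+1}$ greedy w.r.t. $v_j$ and set $v_{j+1}=T_{\pi_{j+1}}v_j+\epsilon_{j+1}$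 with arbitrary errors $\epsilon_{j+1}:S\to\mathbb R$. A non-stationary policy $\sigma_0\sigma_1\cdots$ uses $\sigma_t$ at time $t$, with value $\sum_{t\ge0}\gamma^t P_{\sigma_0}\cdots P_{\sigma_{t-1}}r_{\sigma_t}$. *)

From Stdlib Require Import Reals.
From mathcomp Require Import all_boot.
Set Implicit Arguments.
Unset Strict Implicit.
Unset Printing Implicit Defensive.
Open Scope R_scope.

Section MDP.
Variables (S A : finType).

Definition policy := S -> A.

Definition sumS (f : S -> R) : R := \big[Rplus/0]_(s : S) f s.

(* Transition kernel p s' s a = p(s'|s,a) is a stochastic kernel. *)
Definition stochastic (p : S -> S -> A -> R) : Prop :=
  (forall s' s a, 0 <= p s' s a) /\ (forall s a, sumS (fun s' => p s' s a) = 1).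

Definition rpol (r : S -> A -> R) (pi : policy) : S -> R := fun s => r s (pi s).

Definition Pmat (p : S -> S -> A -> R) (pi : policy) (f : S -> R) : S -> R :=
  fun s => sumS (fun s' => p s' s (pi s) * f s').

Definition Tpol (r : S -> A -> R) (p : S -> S -> A -> R) (gamma : R)
  (pi : policy) (v : S -> R) : S -> R :=
  fun s => rpol r pi s + gamma * Pmat p pi v s.

Definition greedy r p gamma (pi : policy) (v : S -> R) : Prop :=
  forall pi' s, Tpol r p gamma pi' v s <= Tpol r p gamma pi v s.

(* v is a fixed point of the Bellman optimality operator T v = max_pi T_pi v
   (componentwise maximum over policies). *)
Definition optimal_value r p gamma (v : S -> R) : Prop :=
  (forall pi s, Tpol r p gamma pi v s <= v s) /\
  (forall s, exists pi, Tpol r p gamma pi v s = v s).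

(* span f = max_s f s - min_s f s, written as max_{s,t} (f s - f t)
   (this also gives 0 for an empty state space). *)
Definition span (f : S -> R) : R :=
  \big[Rmax/0]_(s : S) \big[Rmax/0]_(t : S) (f s - f t).

Definition supnorm (f : S -> R) : R := \big[Rmax/0]_(s : S) Rabs (f s).

Fixpoint compP (p : S -> S -> A -> R) (sigma : nat -> policy) (t : nat) (f : S -> R)
  : S -> R :=
  match t with
  | 0%N => f
  | t'.+1 => Pmat p (sigma 0%N) (compP p (fun i => sigma (i.+1)) t' f)
  end.

Definition nonstat_value r p gamma (sigma : nat -> policy) (w : S -> R) : Prop :=
  forall s, infinite_sum
              (fun t => gamma ^ t * compP p sigma t (rpol r (sigma t)) s) (w s).

End MDP.

Definition periodic_policy (S A : finType) (pi : nat -> policy S A) (k : nat)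
  : nat -> policy S A := fun t => pi (k - t %% k)%N.

Definition max_err_span (S : finType) (eps : nat -> S -> R) (k : nat) : R :=
  \big[Rmax/0]_(1 <= j < k) span (eps j).

From Stdlib Require Import Reals Lra Lia FunctionalExtensionality.
From mathcomp Require Import all_boot zify.
Open Scope R_scope.
Set Implicit Arguments.
Unset Strict Implicit.

(* Write U_j = T_{pi_j} o ... o T_{pi_1}, D = span(vstar - v_0) and
   e = max_{1 <= j < k} span(eps_j).  The proof
   tracks, along the AVI iterates, a bound on the pair of gaps
   (vstar - v_j)(s) + (v_j - U_j vstar)(t), uniformly in the states s, t:
   one greedy step multiplies it by gamma and the error eps_{j+1} adds at
   most span(eps_{j+1}), so it is at most gamma^j D + e (1-gamma^j)/(1-gamma)
   (avi_gap_bound).  One more greedy step with s = t gives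
   0 <= vstar - U_k vstar <= M := gamma^k D + e (gamma-gamma^k)/(1-gamma).
   Since U_k is monotone and a gamma^k-contraction on ordered pairs, all the
   iterates U_k^n vstar stay within M/(1-gamma^k) below vstar.  Finally,
   U_k^n vstar is the n*k-step Bellman operator of the periodic policy applied
   to vstar, and these converge to its value w, so the bound passes to w. *)

Section BigSums.
Variable I : Type.
Implicit Types (l : seq I) (F G : I -> R).

Lemma big_Rplus_add l F G :
  \big[Rplus/0]_(i <- l) (F i + G i) =
  \big[Rplus/0]_(i <- l) F i + \big[Rplus/0]_(i <- l) G i.
Proof. by elim: l => [|a l IH]; rewrite ?big_nil ?big_cons /=; lra. Qed.

Lemma big_Rplus_scal l F c :
  \big[Rplus/0]_(i <- l) (c * F i) = c * \big[Rplus/0]_(i <- l) F i.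
Proof. by elim: l => [|a l IH]; rewrite ?big_nil ?big_cons /=; nra. Qed.

Lemma big_Rplus_le l F G :
  (forall i, F i <= G i) ->
  \big[Rplus/0]_(i <- l) F i <= \big[Rplus/0]_(i <- l) G i.
Proof. by move=> FG; apply: (big_ind2 Rle) => //; [lra | exact: Rplus_le_compat]. Qed.

Lemma big_Rmax_ge_init l F c : c <= \big[Rmax/c]_(i <- l) F i.
Proof.
elim: l => [|a l IH]; rewrite ?big_nil ?big_cons; first exact: Rle_refl.
exact: Rle_trans IH (Rmax_r _ _).
Qed.

Lemma big_Rmax_lub l F c X :
  c <= X -> (forall i, F i <= X) -> \big[Rmax/c]_(i <- l) F i <= X.
Proof. by move=> cX FX; apply: (big_ind (fun y => y <= X)) => // *; exact: Rmax_lub. Qed.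

End BigSums.

Lemma big_Rmax_ge (I : eqType) (l : seq I) (F : I -> R) c x :
  x \in l -> F x <= \big[Rmax/c]_(i <- l) F i.
Proof.
elim: l => [|a l IH] //; rewrite in_cons big_cons.
case/orP => [/eqP <- | /IH]; first exact: Rmax_l.
by move/Rle_trans; apply; apply: Rmax_r.
Qed.

Section SpanNorm.
Variable S : finType.
Implicit Types f : S -> R.

Lemma span_ge f s t : f s - f t <= span f.
Proof.
apply: Rle_trans (big_Rmax_ge _ 0 (mem_index_enum s)).
exact: (big_Rmax_ge (fun t => f s - f t) 0 (mem_index_enum t)).
Qed.

Lemma span_ge0 f : 0 <= span f.
Proof. exact: big_Rmax_ge_init. Qed.

Lemma supnorm_ge f s : Rabs (f s) <= supnorm f.
Proof. exact: (big_Rmax_ge (fun s => Rabs (f s)) 0 (mem_index_enum s)). Qed.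

Lemma supnorm_le f X : 0 <= X -> (forall s, Rabs (f s) <= X) -> supnorm f <= X.
Proof. exact: big_Rmax_lub. Qed.

End SpanNorm.

Section Operators.
Variables (S A : finType) (r : S -> A -> R) (p : S -> S -> A -> R) (gamma : R).
Hypothesis hp : stochastic p.
Hypothesis hg0 : 0 <= gamma.
Implicit Types (pi : policy S A) (f g : S -> R).

Lemma Pmat_add pi f g s :
  Pmat p pi (fun x => f x + g x) s = Pmat p pi f s + Pmat p pi g s.
Proof. by rewrite /Pmat /sumS -big_Rplus_add; apply: eq_bigr => x _; ring. Qed.

Lemma Pmat_scal pi f c s : Pmat p pi (fun x => c * f x) s = c * Pmat p pi f s.
Proof. by rewrite /Pmat /sumS -big_Rplus_scal; apply: eq_bigr => x _; ring. Qed.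

Lemma Pmat_sub pi f g s :
  Pmat p pi (fun x => f x - g x) s = Pmat p pi f s - Pmat p pi g s.
Proof.
have -> : (fun x => f x - g x) = (fun x => f x + -1 * g x).
  by apply: functional_extensionality => x; ring.
by rewrite Pmat_add Pmat_scal; ring.
Qed.

Lemma Pmat_const pi c s : Pmat p pi (fun=> c) s = c.
Proof.
rewrite /Pmat /sumS -[RHS]Rmult_1_r -(proj2 hp s (pi s)) /sumS -big_Rplus_scal.
by apply: eq_bigr => x _; ring.
Qed.

Lemma Pmat_le pi f g s : (forall x, f x <= g x) -> Pmat p pi f s <= Pmat p pi g s.
Proof.
move=> fg; apply: big_Rplus_le => x.
exact: Rmult_le_compat_l (proj1 hp _ _ _) (fg x).
Qed.

Lemma Pmat_ub pi f c s : (forall x, f x <= c) -> Pmat p pi f s <= c.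
Proof. by move=> fc; rewrite -(Pmat_const pi c s); exact: Pmat_le. Qed.

Lemma Pmat_lb pi f c s : (forall x, c <= f x) -> c <= Pmat p pi f s.
Proof. by move=> cf; rewrite -(Pmat_const pi c s); exact: Pmat_le. Qed.

Lemma Pmat_gap_bound pi pi' f g b :
  (forall s t, f s + g t <= b) ->
  forall s t, Pmat p pi f s + Pmat p pi' g t <= b.
Proof.
move=> fgb s t.
have Pf : forall u, Pmat p pi f s <= b - g u.
  by move=> u; apply: Pmat_ub => x; have := fgb x u; lra.
have Pg : Pmat p pi' g t <= b - Pmat p pi f s.
  by apply: Pmat_ub => u; have := Pf u; lra.
lra.
Qed.

Lemma Tpol_sub pi f g s :
  Tpol r p gamma pi f s - Tpol r p gamma pi g s =
  gamma * Pmat p pi (fun x => f x - g x) s.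
Proof. by rewrite /Tpol Pmat_sub; ring. Qed.

Lemma Tpol_gap pi f g c :
  (forall x, 0 <= f x - g x <= c) ->
  forall s, 0 <= Tpol r p gamma pi f s - Tpol r p gamma pi g s <= gamma * c.
Proof.
move=> fg s; rewrite Tpol_sub; split.
- by apply: Rmult_le_pos => //; apply: Pmat_lb => x; case: (fg x).
- by apply: Rmult_le_compat_l => //; apply: Pmat_ub => x; case: (fg x).
Qed.

End Operators.

Lemma geometric_bounded_cv0 q K (c : nat -> R) :
  0 <= q < 1 -> (forall n, Rabs (c n) <= K) -> Un_cv (fun n => q ^ n.+1 * c n) 0.
Proof.
move=> [q0 q1] cK del del0.
have K0 : 0 <= K := Rle_trans _ _ _ (Rabs_pos _) (cK 0%N).
have delK : 0 < del / (K + 1) by apply: Rdiv_lt_0_compat; lra.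
have [N HN] := pow_lt_1_zero q ltac:(rewrite Rabs_right; lra) _ delK.
exists N => n nN; rewrite /Rdist Rminus_0_r Rabs_mult.
have small : Rabs (q ^ n.+1) * Rabs (c n) <= del / (K + 1) * K.
  apply: Rmult_le_compat; try exact: Rabs_pos; last exact: cK.
  by apply: Rlt_le; apply: HN; lia.
have : del - del / (K + 1) * K = del / (K + 1) by field; lra.
lra.
Qed.

Lemma cv_bound_subseq (u : nat -> R) (phi : nat -> nat) l c B :
  Un_cv u l -> (forall n, (n <= phi n)%N) ->
  (forall n, Rabs (c - u (phi n)) <= B) -> Rabs (c - l) <= B.
Proof.
move=> cv_u phi_ge bnd; apply: Rle_plus_epsilon => del del0.
have [N HN] := cv_u del del0.
have close := HN (phi N) (leP (phi_ge N)); rewrite /Rdist in close.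
have := bnd N; split_Rabs; lra.
Qed.

Section MultiStep.
Variables (S A : finType) (r : S -> A -> R) (p : S -> S -> A -> R) (gamma : R).
Hypothesis hp : stochastic p.
Hypothesis hg0 : 0 <= gamma.
Implicit Types (sigma : nat -> policy S A) (f : S -> R).

Fixpoint Tseq sigma (N : nat) f : S -> R :=
  match N with
  | 0%N => f
  | N'.+1 => Tpol r p gamma (sigma 0%N) (Tseq (fun i => sigma i.+1) N' f)
  end.

Lemma Tseq_ext N f sigma sigma' :
  (forall t, (t < N)%N -> sigma t = sigma' t) -> Tseq sigma N f = Tseq sigma' N f.
Proof.
elim: N sigma sigma' => [|N IH] sigma sigma' eq_sigma //=.
rewrite eq_sigma // (IH _ (fun i => sigma' i.+1)) // => t ltN.
exact: eq_sigma.
Qed.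

Lemma Tseq_add a b f sigma :
  Tseq sigma (a + b) f = Tseq sigma a (Tseq (fun i => sigma (i + a)%N) b f).
Proof.
elim: a sigma => [|a IH] sigma.
  by rewrite add0n; apply: Tseq_ext => t _; rewrite addn0.
rewrite addSn /= IH; congr (Tpol _ _ _ _ (Tseq _ a _)).
by apply: Tseq_ext => t _; rewrite addnS.
Qed.

Lemma Pmat_sum pi (G : nat -> S -> R) N s :
  Pmat p pi (fun x => sum_f_R0 (fun t => G t x) N) s =
  sum_f_R0 (fun t => Pmat p pi (G t) s) N.
Proof. by elim: N => [|N IH] //=; rewrite Pmat_add IH. Qed.

Lemma Tseq_expansion N sigma f s :
  Tseq sigma N.+1 f s =
  sum_f_R0 (fun t => gamma ^ t * compP p sigma t (rpol r (sigma t)) s) N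
  + gamma ^ N.+1 * compP p sigma N.+1 f s.
Proof.
elim: N sigma f s => [|N IH] sigma f s; first by rewrite /= /Tpol /=; ring.
rewrite -[LHS]/(Tpol r p gamma (sigma 0%N) (Tseq (fun i => sigma i.+1) N.+1 f) s) /Tpol.
have -> : Tseq (fun i => sigma i.+1) N.+1 f =
  (fun x => sum_f_R0 (fun t => gamma ^ t * compP p (fun i => sigma i.+1) t
                                 (rpol r (sigma t.+1)) x) N
            + gamma ^ N.+1 * compP p (fun i => sigma i.+1) N.+1 f x).
  by apply: functional_extensionality => x; rewrite IH.
rewrite Pmat_add Pmat_scal Pmat_sum (decomp_sum _ N.+1) /=; last lia.
rewrite Rmult_plus_distr_l scal_sum (PartSum.sum_eq _ (fun t => gamma * gamma ^ t *
  Pmat p (sigma 0%N) (compP p (fun i => sigma i.+1) t (rpol r (sigma t.+1))) s)).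
  by ring.
by move=> t _; rewrite Pmat_scal; ring.
Qed.

Lemma compP_bound f K N sigma s :
  (forall x, Rabs (f x) <= K) -> Rabs (compP p sigma N f s) <= K.
Proof.
move=> fK; elim: N sigma s => [|N IH] sigma s //=.
apply: Rabs_le; split; [apply: (Pmat_lb hp) | apply: (Pmat_ub hp)] => x;
  by have := IH (fun i => sigma i.+1) x; split_Rabs; lra.
Qed.

Lemma Tseq_cv sigma f w s :
  gamma < 1 -> nonstat_value r p gamma sigma w ->
  Un_cv (fun N => Tseq sigma N.+1 f s) (w s).
Proof.
move=> hg1 hw; rewrite -[w s]Rplus_0_r.
have -> : (fun N => Tseq sigma N.+1 f s) =
  (fun N => sum_f_R0 (fun t => gamma ^ t * compP p sigma t (rpol r (sigma t)) s) N
            + gamma ^ N.+1 * compP p sigma N.+1 f s).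
  by apply: functional_extensionality => N; rewrite Tseq_expansion.
apply: CV_plus (hw s) (geometric_bounded_cv0 (conj hg0 hg1) _) => N.
exact: compP_bound (supnorm_ge f).
Qed.

Fixpoint Tupto (pi : nat -> policy S A) (j : nat) f : S -> R :=
  match j with
  | 0%N => f
  | j'.+1 => Tpol r p gamma (pi j'.+1) (Tupto pi j' f)
  end.

Lemma Tupto_gap pi j f g c :
  (forall x, 0 <= f x - g x <= c) ->
  forall s, 0 <= Tupto pi j f s - Tupto pi j g s <= gamma ^ j * c.
Proof.
move=> fg; elim: j => [|j IH] s /=; first by rewrite Rmult_1_l; exact: fg.
by rewrite Rmult_assoc; exact: (Tpol_gap r hp hg0 (pi j.+1) IH).
Qed.

Lemma Tupto_le_optimal pi vstar j s :
  optimal_value r p gamma vstar -> Tupto pi j vstar s <= vstar s.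
Proof.
move=> [Tle _]; elim: j s => [|j IH] s /=; first exact: Rle_refl.
have gap : 0 <= gamma * Pmat p (pi j.+1) (fun x => vstar x - Tupto pi j vstar x) s.
  by apply: Rmult_le_pos => //; apply: (Pmat_lb hp) => x; have := IH x; lra.
have := Tle (pi j.+1) s; rewrite -(Tpol_sub r) in gap; lra.
Qed.

Lemma Tseq_reversed pi j f : Tseq (fun t => pi (j - t)%N) j f = Tupto pi j f.
Proof. by elim: j => [|j IH] //=; rewrite subn0 -IH. Qed.

Lemma Tseq_periodic pi k n f :
  Tseq (periodic_policy pi k) (n * k) f = iter n (Tupto pi k) f.
Proof.
have cycle g : Tseq (periodic_policy pi k) k g = Tupto pi k g.
  rewrite -Tseq_reversed; apply: Tseq_ext => t ltk.
  by rewrite /periodic_policy modn_small.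
elim: n => [|n IH]; first by rewrite mul0n.
rewrite mulSn Tseq_add iterS -IH -cycle; congr (Tseq _ k _).
by apply: Tseq_ext => t _; rewrite /periodic_policy modnDr.
Qed.

Lemma periodic_value_within pi k vstar w B s :
  (1 <= k)%N -> gamma < 1 ->
  nonstat_value r p gamma (periodic_policy pi k) w ->
  (forall n, 0 <= vstar s - iter n (Tupto pi k) vstar s <= B) ->
  Rabs (vstar s - w s) <= B.
Proof.
move=> hk hg1 hw below.
apply: (@cv_bound_subseq (fun N => Tseq (periodic_policy pi k) N.+1 vstar s)
                         (fun n => n * k + k.-1)%N).
- exact: Tseq_cv.
- by move=> n; nia.
- move=> n; have -> : ((n * k + k.-1).+1 = n.+1 * k)%N by nia.
  by rewrite Tseq_periodic; have := below n.+1; split_Rabs; lra.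
Qed.

End MultiStep.

Section AVI.
Variables (S A : finType) (r : S -> A -> R) (p : S -> S -> A -> R) (gamma : R).
Hypothesis hp : stochastic p.
Hypothesis hg0 : 0 <= gamma.
Hypothesis hg1 : gamma < 1.
Variable vstar : S -> R.
Hypothesis hvstar : optimal_value r p gamma vstar.

Lemma greedy_step (pi : policy S A) (u g : S -> R) b :
  greedy r p gamma pi u ->
  (forall s t, vstar s - u s + (u t - g t) <= b) ->
  forall s t, vstar s - Tpol r p gamma pi u s
              + (Tpol r p gamma pi u t - Tpol r p gamma pi g t) <= gamma * b.
Proof.
move=> pi_greedy gap s t.
have [pis opt_s] := proj2 hvstar s.
have better := pi_greedy pis s.
have lhs := Tpol_sub r p gamma pis vstar u s.
have rhs := Tpol_sub r p gamma pi u g t.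
have avg := Pmat_gap_bound hp pis pi gap s t.
have : gamma * (Pmat p pis (fun x => vstar x - u x) s
                + Pmat p pi (fun x => u x - g x) t) <= gamma * b.
  exact: Rmult_le_compat_l.
lra.
Qed.

Variables (k : nat) (v : nat -> S -> R) (pi : nat -> policy S A)
  (eps : nat -> S -> R).
Hypothesis hgreedy : forall j : nat, (j < k)%N -> greedy r p gamma (pi j.+1) (v j).
Hypothesis hstep : forall j : nat, (j.+1 < k)%N ->
  v j.+1 = (fun s => Tpol r p gamma (pi j.+1) (v j) s + eps j.+1 s).
Variable e : R.
Hypothesis he : forall j, (1 <= j < k)%N -> span (eps j) <= e.

Lemma avi_gap_bound j : (j < k)%N ->
  forall s t, vstar s - v j s + (v j t - Tupto r p gamma pi j vstar t) <=
    gamma ^ j * span (fun x => vstar x - v 0%N x)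
    + e * ((1 - gamma ^ j) / (1 - gamma)).
Proof.
elim: j => [|j IH] ltjk s t.
  have := span_ge (fun x => vstar x - v 0%N x) s t.
  have -> : (1 - gamma ^ 0) / (1 - gamma) = 0 by rewrite /=; field; lra.
  by rewrite /=; lra.
have ltjk' : (j < k)%N by apply: ltn_trans ltjk.
have step := greedy_step (hgreedy ltjk') (IH ltjk') s t.
have err := span_ge (eps j.+1) t s.
have := he (j := j.+1); rewrite ltjk => /(_ isT) err_e.
rewrite (hstep ltjk) /=.
have -> : gamma * gamma ^ j * span (fun x => vstar x - v 0%N x)
          + e * ((1 - gamma * gamma ^ j) / (1 - gamma)) =
          gamma * (gamma ^ j * span (fun x => vstar x - v 0%N x)
                   + e * ((1 - gamma ^ j) / (1 - gamma))) + e.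
  by field; lra.
lra.
Qed.

Lemma optimal_minus_cycle : (1 <= k)%N ->
  forall s, 0 <= vstar s - Tupto r p gamma pi k vstar s <=
    gamma ^ k * span (fun x => vstar x - v 0%N x)
    + e * ((gamma - gamma ^ k) / (1 - gamma)).
Proof.
case: k hgreedy avi_gap_bound => [//|k'] greedy_k gap_k _ s.
split; first by have := Tupto_le_optimal hp hg0 pi k'.+1 s hvstar; lra.
have := greedy_step (greedy_k k' (ltnSn k')) (gap_k k' (ltnSn k')) s s.
have -> : gamma * (gamma ^ k' * span (fun x => vstar x - v 0%N x)
                   + e * ((1 - gamma ^ k') / (1 - gamma))) =
          gamma ^ k'.+1 * span (fun x => vstar x - v 0%N x)
          + e * ((gamma - gamma ^ k'.+1) / (1 - gamma)).
  by rewrite /=; field; lra.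
rewrite /=; lra.
Qed.

End AVI.

Lemma iterates_below (S : finType) (U : (S -> R) -> S -> R) (vstar : S -> R) q M :
  0 <= q < 1 -> 0 <= M ->
  (forall f g c, (forall x, 0 <= f x - g x <= c) ->
     forall s, 0 <= U f s - U g s <= q * c) ->
  (forall s, 0 <= vstar s - U vstar s <= M) ->
  forall n s, 0 <= vstar s - iter n U vstar s <= M / (1 - q).
Proof.
move=> [q0 q1] M0 U_gap cycle.
have fixB : M / (1 - q) = M + q * (M / (1 - q)) by field; lra.
elim=> [|n IH] s /=.
  by rewrite Rminus_diag; split; [lra | apply: Rle_mult_inv_pos; lra].
have := U_gap _ _ _ IH s; have := cycle s; lra.
Qed.

Theorem mainTheorem4 (S A : finType)
  (r : S -> A -> R) (p : S -> S -> A -> R) (gamma : R)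
  (hp : stochastic p) (hg0 : 0 <= gamma) (hg1 : gamma < 1)
  (vstar : S -> R) (hvstar : optimal_value r p gamma vstar)
  (k : nat) (hk : (1 <= k)%N)
  (v : nat -> S -> R) (pi : nat -> policy S A) (eps : nat -> S -> R)
  (hgreedy : forall j : nat, (j < k)%N -> greedy r p gamma (pi j.+1) (v j))
  (hstep : forall j : nat, (j.+1 < k)%N ->
     v j.+1 = (fun s => Tpol r p gamma (pi j.+1) (v j) s + eps j.+1 s))
  (w : S -> R) (hw : nonstat_value r p gamma (periodic_policy pi k) w) :
  supnorm (fun s => vstar s - w s) <=
    (gamma / (1 - gamma) - gamma ^ k / (1 - gamma ^ k)) * max_err_span eps k
    + gamma ^ k / (1 - gamma ^ k) * span (fun s => vstar s - v 0%N s).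
Proof.
set D := span (fun s => vstar s - v 0%N s).
set e := max_err_span eps k.
have he : forall j, (1 <= j < k)%N -> span (eps j) <= e.
  by move=> j jk; apply: big_Rmax_ge; rewrite mem_index_iota.
have gk : 0 <= gamma ^ k < 1 by apply: pow_lt_1_compat; [lra | lia].
have gk_le : gamma ^ k <= gamma.
  case: (k) hk => [//|k'] _ /=; have := pow_incr gamma 1 k' (conj hg0 (Rlt_le _ _ hg1)).
  by rewrite pow1; nra.
have e0 : 0 <= e by apply: big_Rmax_ge_init.
have D0 : 0 <= D by apply: span_ge0.
set M := gamma ^ k * D + e * ((gamma - gamma ^ k) / (1 - gamma)).
have M0 : 0 <= M.
  apply: Rplus_le_le_0_compat; apply: Rmult_le_pos => //; first by case: gk.
  by apply: Rle_mult_inv_pos; lra.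
have cycle := optimal_minus_cycle hp hg0 hg1 hvstar hgreedy hstep he hk.
have below := iterates_below gk M0 (Tupto_gap r hp hg0 pi k) cycle.
have -> : (gamma / (1 - gamma) - gamma ^ k / (1 - gamma ^ k)) * e
          + gamma ^ k / (1 - gamma ^ k) * D = M / (1 - gamma ^ k).
  by rewrite /M; field; lra.
apply: supnorm_le => [|s]; first by apply: Rle_mult_inv_pos; lra.
exact: (periodic_value_within hp hg0 hk hg1 hw (below^~ s)).
Qed.
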